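(* Consider the one-dimensional Euler equations with ratio of specific heats $\gamma>1$, conserved variables $u=(\rho,\rho u,\rho e^t)^T$ with $\rho>0$, $p>0$, $\rho e^t = \frac{p}{\gamma-1}+\frac12\rho u^2$, and entropy variables $$v=\Big[\frac{\gamma-S}{\gamma-1}-\frac12\frac{\rho u^2}{p},\ \frac{\rho u}{p},\ -\frac{\rho}{p}\Big]^T,\qquad S=\ln p-\gamma\ln\rho .$$ Given two states (labelled $n$ and $n+1$), set $z_1=\sqrt{\rho/p}$, $z_2=\sqrt{\rho/p}\,u$, $z_3=\sqrt{\rho p}$ for each state, and for a quantity $z$ let $[z]=z^{n+1}-z^{n}$, $\bar z=\frac12(z^n+z^{n+1})$, and $z^{\ln}=[z]/[\ln z]$ (logarithmic mean, with $z^{\ln}=z^n$ when $z^n=z^{n+1}$). Define $u^*=(u_1,u_2,u_3)^T$ by $$u_1=\bar z_1\, z_3^{\ln},\qquad u_2=u_1\frac{\bar z_2}{\bar z_1},\qquad u_3=\frac{1}{2\bar z_1}\Big(-u_1\frac{1+\gamma}{1-\gamma}\frac{1}{z_1^{\ln}}+u_2\bar z_2-\bar z_3\Big).$$ Then $u^*$ satisfies the entropy-conservation condition in time $$[v]\cdot u^* = [\rho],$$ i.e. $(v^{n+1}-v^n)\cdot u^*=\rho^{n+1}-\rho^n$, where $\rho=v\cdot u-U$ is the temporal flux potential for the entropy $U=-\rho S/(\gamma-1)$. Moreover $u^*$ is consistent: if the two states coincide, $u^*$ equals the common conserved state $u$.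
   Context: Here $\rho$ is density, $u$ velocity, $p$ pressure, $e^t$ total energy per unit mass. The entropy function is $U(u)=-\frac{\rho S}{\gamma-1}$, and $v=(\partial U/\partial u)^T$ are the entropy variables given in the claim. A temporal interface flux $u^*$ between time levels $n$ and $n+1$ is called entropy conservative if $[v]\cdot u^*=[\phi]$ with $\phi=v\cdot u-U$; for this entropy $\phi=\rho$. *)

From Stdlib Require Import Reals.
Open Scope R_scope.

Record state := mkState { rho : R; vel : R; pres : R }.

Definition cons1 (s : state) : R := rho s.
Definition cons2 (s : state) : R := rho s * vel s.
Definition cons3 (g : R) (s : state) : R :=
  pres s / (g - 1) + / 2 * rho s * vel s ^ 2.

Definition entS (g : R) (s : state) : R := ln (pres s) - g * ln (rho s).

Definition ev1 (g : R) (s : state) : R :=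
  (g - entS g s) / (g - 1) - / 2 * (rho s * vel s ^ 2) / pres s.
Definition ev2 (s : state) : R := rho s * vel s / pres s.
Definition ev3 (s : state) : R := - (rho s / pres s).

Definition z1 (s : state) : R := sqrt (rho s / pres s).
Definition z2 (s : state) : R := sqrt (rho s / pres s) * vel s.
Definition z3 (s : state) : R := sqrt (rho s * pres s).

Definition amean (a b : R) : R := / 2 * (a + b).
Definition logmean (a b : R) : R :=
  if Req_EM_T a b then a else (b - a) / (ln b - ln a).

Definition ustar1 (sn sn1 : state) : R :=
  amean (z1 sn) (z1 sn1) * logmean (z3 sn) (z3 sn1).
Definition ustar2 (sn sn1 : state) : R :=
  ustar1 sn sn1 * (amean (z2 sn) (z2 sn1) / amean (z1 sn) (z1 sn1)).
Definition ustar3 (g : R) (sn sn1 : state) : R :=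
  / (2 * amean (z1 sn) (z1 sn1)) *
  ( - ustar1 sn sn1 * ((1 + g) / (1 - g)) * / logmean (z1 sn) (z1 sn1)
    + ustar2 sn sn1 * amean (z2 sn) (z2 sn1)
    - amean (z3 sn) (z3 sn1) ).

(* In the parameter vector the entropy variables become
   v = [ln z3 + (g+1)/(g-1) ln z1 + g/(g-1) - z2^2/2, z1 z2, -z1^2] and
   rho = z1 z3, so the logarithms enter [v] only through the jumps [ln z1] and
   [ln z3].  By the defining property of the logarithmic mean these jumps are
   [z1] / z1^ln and [z3] / z3^ln, after which [v] . u* = [rho] is an identity
   between rational functions of the values of z at the two levels and of the
   two logarithmic means. *)

From Stdlib Require Import Reals Lra Field.
Open Scope R_scope.

Lemma logmean_diag (a : R) : logmean a a = a.
Proof.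
  unfold logmean. destruct (Req_EM_T a a) as [_ | Hne]; [reflexivity | now elim Hne].
Qed.

Lemma logmean_pos (a b : R) : 0 < a -> 0 < b -> 0 < logmean a b.
Proof.
  intros Ha Hb. unfold logmean.
  destruct (Req_EM_T a b) as [_ | Hne]; [assumption |].
  destruct (Rlt_or_le a b) as [Hab | Hba].
  - apply Rdiv_lt_0_compat; [lra |].
    pose proof (ln_increasing a b Ha Hab). lra.
  - assert (Hba' : b < a) by lra.
    pose proof (ln_increasing b a Hb Hba').
    replace ((b - a) / (ln b - ln a)) with ((a - b) / (ln a - ln b)) by (field; lra).
    apply Rdiv_lt_0_compat; lra.
Qed.

Lemma ln_logmean (a b : R) : 0 < a -> 0 < b ->
  ln b = ln a + (b - a) / logmean a b.
Proof.
  intros Ha Hb. unfold logmean.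
  destruct (Req_EM_T a b) as [<- | Hne].
  - field. lra.
  - assert (Hln : ln b - ln a <> 0).
    { intro Heq. apply Hne, ln_inv; lra. }
    field. split; lra.
Qed.

Lemma z2_z1 (s : state) : z2 s = z1 s * vel s.
Proof. reflexivity. Qed.

Section ParameterVector.

Variable s : state.
Hypothesis rho_pos : 0 < rho s.
Hypothesis pres_pos : 0 < pres s.

Lemma z1_pos : 0 < z1 s.
Proof. apply sqrt_lt_R0, Rdiv_lt_0_compat; assumption. Qed.

Lemma z3_pos : 0 < z3 s.
Proof. apply sqrt_lt_R0, Rmult_lt_0_compat; assumption. Qed.

Lemma z1_sqr : z1 s ^ 2 = rho s / pres s.
Proof. apply pow2_sqrt, Rlt_le, Rdiv_lt_0_compat; assumption. Qed.

Lemma rho_z : rho s = z1 s * z3 s.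
Proof.
  assert (Hq : 0 < rho s / pres s) by (apply Rdiv_lt_0_compat; assumption).
  assert (Hm : 0 < rho s * pres s) by (apply Rmult_lt_0_compat; assumption).
  unfold z1, z3. rewrite <- sqrt_mult by lra.
  replace (rho s / pres s * (rho s * pres s)) with (rho s * rho s) by (field; lra).
  rewrite sqrt_square; lra.
Qed.

Lemma pres_z : pres s = z3 s / z1 s.
Proof.
  pose proof z1_pos as Hz1.
  assert (Hz3 : z3 s = z1 s * pres s).
  { apply (Rmult_eq_reg_l (z1 s)); [| lra].
    rewrite <- rho_z.
    replace (z1 s * (z1 s * pres s)) with (z1 s ^ 2 * pres s) by ring.
    rewrite z1_sqr. field. lra. }
  rewrite Hz3. field. lra.
Qed.

Lemma entS_z (g : R) : entS g s = (1 - g) * ln (z3 s) - (1 + g) * ln (z1 s).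
Proof.
  pose proof z1_pos. pose proof z3_pos.
  unfold entS. rewrite pres_z, rho_z. unfold Rdiv.
  rewrite ln_mult, ln_Rinv, ln_mult by (try apply Rinv_0_lt_compat; assumption).
  ring.
Qed.

Lemma ev1_z (g : R) :
  ev1 g s = (g + (g - 1) * ln (z3 s) + (g + 1) * ln (z1 s)) / (g - 1) - / 2 * z2 s ^ 2.
Proof.
  unfold ev1. rewrite entS_z.
  replace (/ 2 * (rho s * vel s ^ 2) / pres s)
    with (/ 2 * (rho s / pres s * vel s ^ 2)) by (field; lra).
  rewrite <- z1_sqr, z2_z1. unfold Rdiv. ring.
Qed.

Lemma ev2_z : ev2 s = z1 s * z2 s.
Proof.
  unfold ev2. rewrite z2_z1.
  replace (rho s * vel s / pres s) with (rho s / pres s * vel s) by (field; lra).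
  rewrite <- z1_sqr. ring.
Qed.

Lemma ev3_z : ev3 s = - z1 s ^ 2.
Proof. unfold ev3. rewrite z1_sqr. reflexivity. Qed.

Lemma ustar1_diag : ustar1 s s = cons1 s.
Proof. unfold ustar1, amean, cons1. rewrite logmean_diag, rho_z. field. Qed.

Lemma ustar2_diag : ustar2 s s = cons2 s.
Proof.
  pose proof z1_pos.
  unfold ustar2. rewrite ustar1_diag, z2_z1. unfold amean, cons1, cons2.
  rewrite rho_z. field. lra.
Qed.

Lemma ustar3_diag (g : R) : g <> 1 -> ustar3 g s s = cons3 g s.
Proof.
  intro Hg. pose proof z1_pos.
  unfold ustar3. rewrite ustar1_diag, ustar2_diag, logmean_diag.
  rewrite z2_z1. unfold amean, cons1, cons2, cons3.
  rewrite pres_z, rho_z. field. split; lra.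
Qed.

End ParameterVector.

Theorem ustar_entropy_conservative (g : R) (sn sn1 : state) :
  g <> 1 ->
  0 < rho sn -> 0 < pres sn -> 0 < rho sn1 -> 0 < pres sn1 ->
  (ev1 g sn1 - ev1 g sn) * ustar1 sn sn1
  + (ev2 sn1 - ev2 sn) * ustar2 sn sn1
  + (ev3 sn1 - ev3 sn) * ustar3 g sn sn1
  = rho sn1 - rho sn.
Proof.
  intros Hg Hr0 Hp0 Hr1 Hp1.
  pose proof (z1_pos sn Hr0 Hp0) as Ha0. pose proof (z1_pos sn1 Hr1 Hp1) as Ha1.
  pose proof (z3_pos sn Hr0 Hp0) as Hc0. pose proof (z3_pos sn1 Hr1 Hp1) as Hc1.
  pose proof (logmean_pos _ _ Ha0 Ha1) as HLa.
  pose proof (logmean_pos _ _ Hc0 Hc1) as HLc.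
  rewrite !ev1_z, !ev2_z, !ev3_z, (rho_z sn), (rho_z sn1) by assumption.
  rewrite (ln_logmean (z1 sn) (z1 sn1)), (ln_logmean (z3 sn) (z3 sn1)) by assumption.
  unfold ustar3, ustar2, ustar1, amean.
  field. repeat split; lra.
Qed.

Theorem mainTheorem1 (g : R) (sn sn1 : state) :
  1 < g ->
  0 < rho sn -> 0 < pres sn -> 0 < rho sn1 -> 0 < pres sn1 ->
  (* entropy conservation in time: [v] . u* = [rho] *)
  (ev1 g sn1 - ev1 g sn) * ustar1 sn sn1
  + (ev2 sn1 - ev2 sn) * ustar2 sn sn1
  + (ev3 sn1 - ev3 sn) * ustar3 g sn sn1
  = rho sn1 - rho sn
  /\
  (* consistency: if the two states coincide, u* is the conserved state *)
  (sn = sn1 ->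
     ustar1 sn sn1 = cons1 sn /\ ustar2 sn sn1 = cons2 sn /\
     ustar3 g sn sn1 = cons3 g sn).
Proof.
  intros Hg Hr0 Hp0 Hr1 Hp1.
  assert (Hg1 : g <> 1) by lra.
  split.
  - exact (ustar_entropy_conservative g sn sn1 Hg1 Hr0 Hp0 Hr1 Hp1).
  - intros <-.
    exact (conj (ustar1_diag sn Hr0 Hp0)
             (conj (ustar2_diag sn Hr0 Hp0) (ustar3_diag sn Hr0 Hp0 g Hg1))).
Qed.
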